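(* Consider the system $\dot{\boldsymbol{x}}(t)=-L(t)\boldsymbol{x}(t)$, $\boldsymbol{x}(t)\in\mathbb{R}^{dn}$, on a matrix-weighted switching network $\mathcal{G}(t)$ satisfying Assumption 2 (described in the context), with switching set $\{\mathcal{G}_1,\dots,\mathcal{G}_M\}$ and $L(\mathcal{G}_i)$ the matrix-valued Laplacian of $\mathcal{G}_i$. If $\lim_{t\to\infty}\boldsymbol{x}(t)=\boldsymbol{x}^*$, then $$\boldsymbol{x}^*\in\bigcap_{i=1}^{M}\mathrm{null}(L(\mathcal{G}_i)).$$ Moreover, $$\boldsymbol{x}^*=\sum_{i=1}^{r}(\boldsymbol{\eta}_i^\top\boldsymbol{x}(t_0))\boldsymbol{\eta}_i,$$ where $\boldsymbol{\eta}_1,\dots,\boldsymbol{\eta}_r\in\mathbb{R}^{dn}$ is an orthonormal basis of $\bigcap_{i=1}^{M}\mathrm{null}(L(\mathcal{G}_i))$ (i.e. $\mathrm{span}\{\boldsymbol{\eta}_1,\dots,\boldsymbol{\eta}_r\}$ equals this intersection and $\boldsymbol{\eta}_i^\top\boldsymbol{\eta}_j=1$ if $i=j$, $0$ otherwise).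
   Context: A matrix-weighted switching network $\mathcal{G}(t)=(\mathcal{V},\mathcal{E}(t),A(t))$ has node set $\mathcal{V}=\{1,\dots,n\}$, $n>1$; each edge $(i,j)\in\mathcal{E}(t)$ carries a symmetric weight $A_{ij}(t)\in\mathbb{R}^{d\times d}$ which is either positive (semi-)definite or negative (semi-)definite, with $A_{ij}=A_{ji}$, $A_{ii}=0$, and $A_{ij}(t)=0$ if $(i,j)\notin\mathcal{E}(t)$. Set $|A_{ij}|=A_{ij}$ if $A_{ij}\succeq0$ and $-A_{ij}$ if $A_{ij}\preceq0$. With $A=[A_{ij}]\in\mathbb{R}^{dn\times dn}$ and $D=\mathrm{diag}(D_1,\dots,D_n)$, $D_i=\sum_{j:(i,j)\in\mathcal{E}}|A_{ij}|$, the matrix-valued Laplacian is $L=D-A$; the system $\dot{\boldsymbol{x}}=-L(t)\boldsymbol{x}$ is the stacked form of $\dot{\boldsymbol{x}}_i=-\sum_{j}|A_{ij}|(\boldsymbol{x}_i-\mathrm{sgn}(A_{ij})\boldsymbol{x}_j)$, where $\mathrm{sgn}(A)$ is $1$, $-1$, $0$ for nonzero PSD, nonzero NSD, zero $A$ respectively. The initial time is $t_0=0$. Assumption 1: there is a sequence $\{t_k\}_{k\in\mathbb{N}}$ with $t_0=0$, $t_k\to\infty$, $t_{k+1}-t_k\ge\alpha>0$, and $\mathcal{G}(t)$ is constant on each $[t_k,t_{k+1})$. Assumption 2: Assumption 1 holds, and $\mathcal{G}(t)$ is always chosen from a finite set $\{\mathcal{G}_1,\dots,\mathcal{G}_M\}$,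 each $\mathcal{G}_i$ appearing infinitely many times in the sequence. *)

From HB Require Import structures.
From mathcomp Require Import all_boot all_order all_algebra.
From mathcomp Require Import all_classical all_reals all_analysis.
Set Implicit Arguments. Unset Strict Implicit. Unset Printing Implicit Defensive.
Import Order.TTheory GRing.Theory Num.Theory.
Import numFieldNormedType.Exports.
Local Open Scope ring_scope.

Definition psd (R : realType) (d : nat) (A : 'M[R]_d) : Prop :=
  forall v : 'cV[R]_d, 0 <= (v^T *m A *m v) ord0 ord0.
Definition nsd (R : realType) (d : nat) (A : 'M[R]_d) : Prop :=
  forall v : 'cV[R]_d, (v^T *m A *m v) ord0 ord0 <= 0.

Definition mxabs (R : realType) (d : nat) (A : 'M[R]_d) : 'M[R]_d :=
  if `[< psd A >] then A else - A.

(* A matrix-weighted graph on n nodes with d x d weights, given by its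
   weight function W i j = A_ij (A_ij = 0 iff (i,j) is not an edge, or the
   edge carries the zero weight; in both cases it contributes nothing). *)
Definition mw_graph (R : realType) (n d : nat)
    (W : 'I_n -> 'I_n -> 'M[R]_d) : Prop :=
  [/\ forall i, W i i = 0,
      forall i j, W i j = W j i,
      forall i j, (W i j)^T = W i j &
      forall i j, psd (W i j) \/ nsd (W i j)].

(* Block indexing of R^{dn}: global index k <-> (node k %/ d, component k %% d). *)
Lemma blk_node_lt (n d k : nat) : (k < n * d -> k %/ d < n)%N.
Proof. by case: d => [|d]; [rewrite muln0 | rewrite ltn_divLR]. Qed.
Lemma blk_comp_lt (n d k : nat) : (k < n * d -> k %% d < d)%N.
Proof. by case: d => [|d]; [rewrite muln0 | rewrite ltn_pmod]. Qed.
Definition blk_node (n d : nat) (k : 'I_(n * d)) : 'I_n :=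
  Ordinal (blk_node_lt (ltn_ord k)).
Definition blk_comp (n d : nat) (k : 'I_(n * d)) : 'I_d :=
  Ordinal (blk_comp_lt (ltn_ord k)).

Definition blockmx (R : realType) (n d : nat) (B : 'I_n -> 'I_n -> 'M[R]_d)
    : 'M[R]_(n * d) :=
  \matrix_(k, l) B (blk_node k) (blk_node l) (blk_comp k) (blk_comp l).

(* Matrix-valued Laplacian L = D - A, D = diag(D_i), D_i = sum_j |A_ij|. *)
Definition mw_laplacian (R : realType) (n d : nat)
    (W : 'I_n -> 'I_n -> 'M[R]_d) : 'M[R]_(n * d) :=
  blockmx (fun i j => (i == j)%:R *: (\sum_(l < n) mxabs (W i l)) - W i j).

From HB Require Import structures.
From mathcomp Require Import all_boot all_order all_algebra.
From mathcomp Require Import all_classical all_reals all_analysis.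
From mathcomp Require Import lra.
Import Order.TTheory GRing.Theory Num.Theory.
Import numFieldNormedType.Exports.
Local Open Scope ring_scope.
Local Open Scope classical_set_scope.

(* The Laplacians are symmetric.  Hence, for a vector eta in their common
   kernel, eta^T x(t) has derivative -(L eta)^T x(t) = 0 on every dwell
   interval, so it is conserved and eta^T x* = eta^T x(0); expanding x* in the
   orthonormal basis gives the formula.  For u = L_m x*, the derivative of
   u^T x(t) on a mode-m interval is -(L_m u)^T x(t), which tends to -|u|^2.
   Mode m recurs on intervals of length at least alpha arbitrarily far out,
   while u^T x(t) converges, so the mean value theorem forces |u|^2 = 0. *)

Local Notation dotcv u v := ((u^T *m v) ord0 ord0).

Section ColumnDotProduct.
Context {R : realType} {p : nat}.
Implicit Types u v : 'cV[R]_p.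

Lemma dotcvE u v : dotcv u v = \sum_k u k ord0 * v k ord0.
Proof. by rewrite !mxE; apply: eq_bigr => k _; rewrite mxE. Qed.

Lemma dotcv_self_eq0 u : dotcv u u = 0 -> u = 0.
Proof.
rewrite dotcvE => /psumr_eq0P u0; apply/matrixP => k j.
have /eqP := u0 (fun i _ => ltac:(rewrite -expr2 sqr_ge0 //)) k isT.
by rewrite (ord1 j) mxE mulf_eq0 orbb => /eqP.
Qed.

Lemma dotcv_mulmx_sym (L : 'M[R]_p) u v : L^T = L ->
  dotcv u (L *m v) = dotcv (L *m u) v.
Proof. by move=> Lsym; rewrite trmx_mul Lsym mulmxA. Qed.

Lemma dotcv_orthonormal_sum r (eta : 'I_r -> 'cV[R]_p) (c : 'I_r -> R) i :
  (forall i j, dotcv (eta i) (eta j) = (i == j)%:R) ->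
  dotcv (eta i) (\sum_j c j *: eta j) = c i.
Proof.
move=> orth; rewrite mulmx_sumr summxE (bigD1 i) //= big1 => [|j ji].
  by rewrite -scalemxAr mxE orth eqxx mulr1 addr0.
by rewrite -scalemxAr mxE orth eq_sym (negbTE ji) mulr0.
Qed.

Lemma continuous_dotcv u : continuous (fun v => dotcv u v).
Proof.
have -> : (fun v => dotcv u v) =
    fun v => \sum_(k <- index_enum 'I_p) u k ord0 * v k ord0.
  by apply: funext => v; rewrite dotcvE.
elim: (index_enum _) => [|k s IHs] v.
  under eq_fun do rewrite big_nil.
  exact: cst_continuous.
under eq_fun do rewrite big_cons.
apply: (@continuousD _ _ _ (fun w : 'cV[R]_p => u k ord0 * w k ord0));
  last exact: IHs.
apply: (@continuousM _ _ (cst (u k ord0)) (fun w : 'cV[R]_p => w k ord0)).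
  exact: cst_continuous.
exact: coord_continuous.
Qed.

Lemma is_derive_dotcv u (y : R -> 'cV[R]_p) (t : R) y' : is_derive t 1 y y' ->
  is_derive t 1 (fun s => dotcv u (y s)) (dotcv u y').
Proof.
case=> dy <-; rewrite derive_mx // dotcvE.
have -> : (fun s => dotcv u (y s)) = \sum_k (fun s => u k ord0 * y s k ord0).
  by apply: funext => s; rewrite dotcvE fct_sumE.
apply: is_derive_sum => k; rewrite mxE.
apply: is_deriveZ; apply: derivableP.
exact: (derivable_mxP y t 1).1 dy k ord0.
Qed.

End ColumnDotProduct.

Lemma trmx_mxabs {R : realType} {d : nat} (A : 'M[R]_d) :
  A^T = A -> (mxabs A)^T = mxabs A.
Proof.
by move=> Asym; rewrite /mxabs; case: ifP => _; rewrite ?linearN /= Asym.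
Qed.

Lemma trmx_mw_laplacian {R : realType} {n d : nat}
    (W : 'I_n -> 'I_n -> 'M[R]_d) :
  (forall i j, W i j = W j i) -> (forall i j, (W i j)^T = W i j) ->
  (mw_laplacian W)^T = mw_laplacian W.
Proof.
move=> Wsym Wtr; apply/matrixP => k l.
have W_swap i j a b : W i j a b = W j i b a by rewrite -[in LHS]Wtr mxE Wsym.
have abs_swap i j a b : mxabs (W i j) a b = mxabs (W i j) b a.
  by rewrite -[in LHS]trmx_mxabs ?Wtr // mxE.
rewrite /mw_laplacian /blockmx !mxE !summxE eq_sym W_swap.
case: eqP => [->|_]; last by rewrite !mul0r.
by congr (_ * _ - _); apply: eq_bigr => j _; rewrite abs_swap.
Qed.

Lemma cvg_derive_window_eq0 {R : realType} {f df : R -> R} {a l alpha : R} :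
  0 < alpha -> f @ +oo --> a -> df @ +oo --> l ->
  (forall M, exists2 t0, M < t0 &
     {within `[t0, t0 + alpha], continuous f} /\
     forall t, t \in `]t0, t0 + alpha[%R -> is_derive t 1 f (df t)) ->
  l = 0.
Proof.
move=> alpha_gt0 fa dfl windows; apply/eqP/negPn/negP => l_neq0.
have l_gt0 : 0 < `|l| by rewrite normr_gt0.
have e1 : 0 < alpha * `|l| / 4 by rewrite divr_gt0 ?mulr_gt0.
have e2 : 0 < `|l| / 2 by rewrite divr_gt0.
have [M [_ HM]] :=
  filterI ((cvgrPdist_lt _ _).1 fa _ e1) ((cvgrPdist_lt _ _).1 dfl _ e2).
have [t0 M_lt_t0 [fcont fder]] := windows M.
have t0_lt : t0 < t0 + alpha by rewrite ltrDl.
have [c /[!in_itv] /= /andP[t0_lt_c _]] := MVT t0_lt fder fcont.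
rewrite addrAC subrr add0r => mvt.
have [f1 _] := HM (t0 + alpha) (lt_trans M_lt_t0 t0_lt).
have [f0 _] := HM t0 M_lt_t0.
have [_ dfc] := HM c (lt_trans M_lt_t0 t0_lt_c).
have upper : `|f (t0 + alpha) - f t0| < alpha * `|l| / 2.
  rewrite (le_lt_trans (ler_distD a _ _)) // distrC; lra.
have lower : alpha * `|l| / 2 < `|f (t0 + alpha) - f t0|.
  rewrite mvt normrM (gtr0_norm alpha_gt0).
  have := lerB_dist l (df c); nra.
by have := lt_trans upper lower; rewrite ltxx.
Qed.

Section SwitchedLinearFlow.
Context {R : realType} {p M : nat} {Ls : 'I_M -> 'M[R]_p}.
Context {tk : nat -> R} {alpha : R} {sigma : nat -> 'I_M} {x : R -> 'cV[R]_p}.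
Implicit Types u eta : 'cV[R]_p.
Hypothesis Ls_tr : forall m, (Ls m)^T = Ls m.
Hypothesis tk0 : tk 0%N = 0.
Hypothesis alpha_gt0 : 0 < alpha.
Hypothesis dwell : forall k, tk k + alpha <= tk k.+1.
Hypothesis x_cont : {within `[0, +oo[, continuous x}.
Hypothesis x_ode : forall k t, tk k < t < tk k.+1 ->
  is_derive t 1 x (- (Ls (sigma k) *m x t)).

Lemma switch_time_lt k : tk k < tk k.+1.
Proof. by apply: lt_le_trans (dwell k); rewrite ltrDl. Qed.

Lemma switch_time_ge0 k : 0 <= tk k.
Proof.
elim: k => [|k IHk]; first by rewrite tk0.
exact/ltW/(le_lt_trans IHk)/switch_time_lt.
Qed.

Lemma continuous_dotcv_flow u a b : 0 <= a ->
  {within `[a, b], continuous (fun t => dotcv u (x t))}.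
Proof.
move=> a_ge0.
have x_ab : {within `[a, b], continuous x}.
  apply: continuous_subspaceW x_cont => t /=.
  by rewrite !in_itv /= => /andP[/(le_trans a_ge0) -> _].
exact: (@within_continuous_comp _ _ _ _ x (fun v => dotcv u v)
  (fun v _ => continuous_dotcv u v) x_ab).
Qed.

Lemma is_derive_dotcv_flow u k t : tk k < t < tk k.+1 ->
  is_derive t 1 (fun t => dotcv u (x t)) (- dotcv (Ls (sigma k) *m u) (x t)).
Proof.
move=> /x_ode/(is_derive_dotcv u).
by rewrite mulmxN mxE dotcv_mulmx_sym.
Qed.

Lemma dotcv_flow_switch eta k : (forall m, Ls m *m eta = 0) ->
  dotcv eta (x (tk k)) = dotcv eta (x 0).
Proof.
move=> eta_ker; elim: k => [|k <-]; first by rewrite tk0.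
have [|c _] := MVT (df := fun t => - dotcv (Ls (sigma k) *m eta) (x t))
  (switch_time_lt k) _ (continuous_dotcv_flow eta _ _ (switch_time_ge0 k)).
  by move=> t; rewrite in_itv; exact: is_derive_dotcv_flow.
rewrite eta_ker trmx0 mul0mx [(0 : 'M[R]_1) _ _]mxE oppr0 mul0r => /eqP.
by rewrite subr_eq0 => /eqP.
Qed.

Context {xstar : 'cV[R]_p}.
Hypothesis x_cvg : x t @[t --> +oo] --> xstar.

Lemma dotcv_flow_cvg u : dotcv u (x t) @[t --> +oo] --> dotcv u xstar.
Proof. exact: cvg_comp x_cvg (continuous_dotcv u xstar). Qed.

Hypothesis tk_cvg : tk @ \oo --> +oo.

Lemma dotcv_flow_limit eta : (forall m, Ls m *m eta = 0) ->
  dotcv eta xstar = dotcv eta (x 0).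
Proof.
move=> eta_ker; have := cvg_comp _ _ tk_cvg (dotcv_flow_cvg eta).
under eq_cvg do rewrite /= dotcv_flow_switch //.
by move=> lim; exact: (cvg_unique _ lim (cvg_cst _)).
Qed.

Hypothesis sigma_recurrent :
  forall (m : 'I_M) (N : nat), exists2 k, (N <= k)%N & sigma k = m.

Lemma flow_limit_in_ker m : Ls m *m xstar = 0.
Proof.
set u := Ls m *m xstar.
suff : - dotcv (Ls m *m u) xstar = 0.
  by move/eqP; rewrite oppr_eq0 -dotcv_mulmx_sym // => /eqP/dotcv_self_eq0.
apply: (cvg_derive_window_eq0 (df := fun t => - dotcv (Ls m *m u) (x t))
  alpha_gt0 (dotcv_flow_cvg u)); first exact: (cvgN (dotcv_flow_cvg _)).
move=> T; have [N _ tk_gt] := (cvgryPgt _).1 tk_cvg T.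
have [k N_le_k sigma_k] := sigma_recurrent m N.
exists (tk k); first exact: tk_gt.
split; first exact/continuous_dotcv_flow/switch_time_ge0.
move=> t /[!in_itv] /= /andP[tk_lt_t t_lt]; rewrite -sigma_k.
by apply: is_derive_dotcv_flow; rewrite tk_lt_t (lt_le_trans t_lt (dwell k)).
Qed.

End SwitchedLinearFlow.

Theorem theorem5 (R : realType) (n d M : nat) (hn : (1 < n)%N)
    (Gs : 'I_M -> 'I_n -> 'I_n -> 'M[R]_d)
    (hGs : forall m, mw_graph (Gs m))
    (tk : nat -> R) (alpha : R) (sigma : nat -> 'I_M)
    (ht0 : tk 0%N = 0) (halpha : 0 < alpha)
    (hdwell : forall k, tk k + alpha <= tk k.+1)
    (htinf : tk @ \oo --> +oo)
    (hinf : forall (m : 'I_M) (N : nat), exists2 k, (N <= k)%N & sigma k = m)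
    (x : R -> 'cV[R]_(n * d))
    (hcont : {within `[0, +oo[, continuous x})
    (hode : forall k t, tk k < t < tk k.+1 ->
       is_derive t (1 : R) x (- (mw_laplacian (Gs (sigma k)) *m x t)))
    (xstar : 'cV[R]_(n * d))
    (hlim : x t @[t --> +oo] --> xstar) :
  (forall m, mw_laplacian (Gs m) *m xstar = 0) /\
  (forall (r : nat) (eta : 'I_r -> 'cV[R]_(n * d)),
     (forall i j, ((eta i)^T *m eta j) ord0 ord0 = (i == j)%:R) ->
     (forall v : 'cV[R]_(n * d),
        (forall m, mw_laplacian (Gs m) *m v = 0) <->
        exists c : 'I_r -> R, v = \sum_(i < r) c i *: eta i) ->
     xstar = \sum_(i < r) ((eta i)^T *m x 0) ord0 ord0 *: eta i).
Proof.
have L_tr m : (mw_laplacian (Gs m))^T = mw_laplacian (Gs m).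
  by case: (hGs m) => _ Wsym Wtr _; exact: trmx_mw_laplacian.
have xstar_ker :=
  flow_limit_in_ker L_tr ht0 halpha hdwell hcont hode hlim htinf hinf.
split=> // r eta orth span.
have eta_ker i m : mw_laplacian (Gs m) *m eta i = 0.
  apply/(span _).2; exists (fun j => (i == j)%:R).
  rewrite (bigD1 i) //= eqxx scale1r big1 ?addr0 // => j ji.
  by rewrite eq_sym (negbTE ji) scale0r.
have eta_conserved i :=
  dotcv_flow_limit L_tr ht0 halpha hdwell hcont hode hlim htinf _ (eta_ker i).
have [c xstarE] := (span xstar).1 xstar_ker.
rewrite {1}xstarE; apply: eq_bigr => i _; congr (_ *: _).
by rewrite -eta_conserved xstarE dotcv_orthonormal_sum.
Qed.
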